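(* For every pair of positive integers $n,d$ there exist an integer $N=N(n,d)$ and a pointed hypersurface $(p,Y)$ of degree $d$ in $\mathbb{P}^N$ such that every member of $\mathcal{U}_{n,d}$ is a parameterized linear section of $(p,Y)$. Furthermore, for every $(q,X)\in\mathcal{U}_{n,d}$ there exists a parameterized $n$-dimensional linear space $\Lambda\in\mathcal{G}_p(n,N)$ with $\phi_n(\Lambda)=(q,X)$ such that the induced map on tangent spaces $d\phi_n: T_\Lambda\mathcal{G}_p(n,N)\to T_{(q,X)}\mathcal{U}_{n,d}$ is surjective.
   Context: $\mathcal{U}_{n,d}$ is the universal hypersurface of degree $d$ in $\mathbb{P}^n$: the variety of pairs $(q,X)$ (''pointed hypersurfaces'') where $X\subset\mathbb{P}^n$ is a hypersurface of degree $d$ and $q\in X$. A parameterized linear space of dimension $r$ in $\mathbb{P}^N$ is a linear embedding $f:\mathbb{P}^r\to\mathbb{P}^N$; $\mathcal{G}_p(r,N)$ denotes the space of parameterized $r$-dimensional linear spaces in $\mathbb{P}^N$ whose image contains $p$. For a pointed hypersurface $(p,Y)$ in $\mathbb{P}^N$ and $f\in\mathcal{G}_p(r,N)$ whose image is not contained in $Y$, the parameterized linear section of $(p,Y)$ by $f$ is $(f^{-1}(p),f^{-1}(Y))\in\mathcal{U}_{r,d}$. This defines the rational map $\phi_r:\mathcal{G}_p(r,N)\dashrightarrow\mathcal{U}_{r,d}$. *)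

From HB Require Import structures.
From mathcomp Require Import all_boot all_order all_algebra.
From mathcomp Require Import mpoly.
Set Implicit Arguments. Unset Strict Implicit. Unset Printing Implicit Defensive.
Import Order.TTheory GRing.Theory.
Local Open Scope ring_scope.

(* Conventions: a point of P^n is represented by a nonzero column vector in
   K^(n+1) (up to nonzero scalars); a hypersurface of degree d in P^n by a
   nonzero homogeneous polynomial of degree d in n+1 variables (up to nonzero
   scalars), i.e. a point of P(S_d).  A parameterized linear space
   f : P^r -> P^N is an injective (N+1)x(r+1) matrix (up to scalars). *)

Section Defs.
Variable K : fieldType.

Definition pev (k : nat) (F : {mpoly K[k]}) (v : 'cV[K]_k) : K :=
  F.@[fun i => v i 0].

Definition linforms (m k : nat) (A : 'M[K]_(m, k)) : m.-tuple {mpoly K[k]} :=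
  [tuple \sum_(j < k) A i j *: 'X_j | i < m].

Definition pullback (m k : nat) (F : {mpoly K[m]}) (A : 'M[K]_(m, k)) :=
  F \mPo linforms A.

(* d/de F((A + e B) x) at e = 0, i.e. sum_i (d_i F)(A x) * (B x)_i *)
Definition dpullback (m k : nat) (F : {mpoly K[m]}) (A B : 'M[K]_(m, k)) :
  {mpoly K[k]} :=
  \sum_(i < m) (pullback (F^`M(i)) A * tnth (linforms B) i).

Definition pointed_hypersurface (k d : nat) (q : 'cV[K]_k) (F : {mpoly K[k]}) :=
  [/\ q != 0, F != 0, F \is d.-homog & pev F q = 0].

Definition param_linear (m k : nat) (A : 'M[K]_(m, k)) := \rank A = k.

(* (q, G) is the parameterized linear section of (p, Y) by A:
   A is a linear embedding, its image is not contained in Y,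
   f^{-1}(p) = q (so p lies in the image) and f^{-1}(Y) = G. *)
Definition is_param_section (m k : nat) (p : 'cV[K]_m) (Y : {mpoly K[m]})
    (A : 'M[K]_(m, k)) (q : 'cV[K]_k) (G : {mpoly K[k]}) :=
  [/\ param_linear A, pullback Y A != 0,
      exists2 l : K, l != 0 & A *m q = l *: p
    & exists2 mu : K, mu != 0 & pullback Y A = mu *: G].

(* Surjectivity of d(phi_r) at A : T_A G_p(r,N) -> T_{(q,G)} U_{r,d}, with
   Zariski tangent spaces described by first-order deformations
   (K[e]/(e^2)-points).  A tangent vector to U_{r,d} at (q,G) is a pair
   (q', G') with G' homogeneous of degree d and
   (G + e G')(q + e q') = 0 mod e^2, modulo (q, G).  It is in the image of
   d phi iff some first-order deformation A + e B of A satisfies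
   (A + e B)(q + e q') = (l + e l') p   and
   Y o (A + e B) = (mu + e mu') (G + e G')   mod e^2
   (in particular p stays in the image of A + e B, i.e. A + e B is a tangent
   vector of G_p(r,N)). *)
Definition dphi_surjective (m k d : nat) (p : 'cV[K]_m) (Y : {mpoly K[m]})
    (A : 'M[K]_(m, k)) (q : 'cV[K]_k) (G : {mpoly K[k]}) :=
  forall (l mu : K), A *m q = l *: p -> pullback Y A = mu *: G ->
  forall (q' : 'cV[K]_k) (G' : {mpoly K[k]}),
    G' \is d.-homog ->
    pev G' q + \sum_(i < k) pev (G^`M(i)) q * q' i 0 = 0 ->
    exists (B : 'M[K]_(m, k)) (l' mu' : K),
      A *m q' + B *m q = l' *: p /\
      dpullback Y A B = mu' *: G + mu *: G'.

End Defs.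

(* Fix q and a coordinate c with q_c <> 0. The linear forms W = x_c / q_c and
   Z_i = x_i - (q_i / q_c) x_c satisfy W(q) = 1, Z_i(q) = 0 and x_i = Z_i + q_i W, so the
   degree-d forms vanishing at q are exactly the combinations of the products of d forms
   among W, Z_0, ..., Z_n other than W^d.  The universal hypersurface Y is the sum, over
   all these words b, of a product of d fresh coordinates x_(b,1) ... x_(b,d), and p has
   coordinate 0 exactly at the Z-factors.  Sending x_(b,j) to the j-th form of b, with the
   coefficient of b in X put on one Z-factor, cuts (q, X) out of (p, Y).
   For the differential, a tangent vector (q', G') is lifted by perturbing every row by a
   multiple of W, which keeps p in the image, and one Z-row of each word by a multiple of
   that Z.  The W-perturbations contribute -E, where E(q) = D_q' X(q) = -G'(q), so
   G' + E is again a combination of the words other than W^d, which the Z-perturbations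
   realise. *)

From HB Require Import structures.
From mathcomp Require Import all_boot all_order all_algebra.
From mathcomp Require Import mpoly.
Import GRing.Theory.
Local Open Scope ring_scope.
Set Implicit Arguments. Unset Strict Implicit. Unset Printing Implicit Defensive.

Lemma sum_option (R : nmodType) (T : finType) (F : option T -> R) :
  \sum_o F o = F None + \sum_i F (Some i).
Proof.
rewrite (bigD1 None) // (reindex_omap Some id) => [|[]//].
by congr (_ + _); apply: eq_bigl => i; rewrite eqxx.
Qed.

Lemma exists_ord_bij (T : finType) (t0 : T) :
  exists N (h : T -> 'I_N.+1) (g : 'I_N.+1 -> T), cancel h g /\ cancel g h.
Proof.
have eN : #|T|.-1.+1 = #|T| by rewrite prednK //; apply/card_gt0P; exists t0.
exists #|T|.-1, (fun t => cast_ord (esym eN) (enum_rank t)),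
  (fun r => enum_val (cast_ord eN r)).
by split=> x; rewrite ?cast_ordKV ?enum_rankK ?enum_valK ?cast_ordK.
Qed.

Lemma cV_neq0P (K : fieldType) n (v : 'cV[K]_n) : v != 0 -> exists i, v i 0 != 0.
Proof.
move=> v_neq0; apply/existsP; apply: contraNT v_neq0 => /existsPn v0.
by apply/eqP/matrixP => i j; rewrite ord1 mxE; apply/eqP/negbNE/v0.
Qed.

Section TwistedDerivation.
Variables (R S : comPzRingType) (phi : {rmorphism R -> S}) (D : R -> S).
Hypothesis DM : forall x y, D (x * y) = D x * phi y + phi x * D y.

Lemma derivation1 : D 1 = 0.
Proof.
have := DM 1 1; rewrite mulr1 rmorph1 mulr1 mul1r -{1}[D 1]addr0.
by move/addrI/esym.
Qed.

Lemma derivation_prod_seq (I : eqType) (s : seq I) (F : I -> R) : uniq s ->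
  D (\prod_(i <- s) F i) = \sum_(i <- s) D (F i) * \prod_(j <- s | j != i) phi (F j).
Proof.
elim: s => [|x s IHs] /=; first by rewrite !big_nil derivation1.
case/andP=> xNs uniq_s; rewrite !big_cons DM IHs // eqxx /= rmorph_prod mulr_sumr.
congr (_ * _ + _).
  rewrite big_seq [RHS]big_seq_cond; apply: eq_bigl => j.
  by case: eqP => [->|_]; rewrite ?(negPf xNs) /= ?andbT.
rewrite !big_seq; apply: eq_bigr => i si.
rewrite big_cons ifT; first exact: mulrCA.
by apply: contraNneq xNs => ->.
Qed.

Lemma derivation_prod (I : finType) (F : I -> R) :
  D (\prod_i F i) = \sum_i D (F i) * \prod_(j | j != i) phi (F j).
Proof. exact/derivation_prod_seq/index_enum_uniq. Qed.

End TwistedDerivation.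

(* Both [dpullback] and the tangent condition of [dphi_surjective] are of this form. *)
Section ChainDerivative.
Variables (K : fieldType) (n : nat) (S : comPzRingType).
Variables (phi : {rmorphism {mpoly K[n]} -> S}) (w : 'I_n -> S).

Definition chain_deriv (F : {mpoly K[n]}) : S := \sum_i phi (F^`M(i)) * w i.

Fact chain_deriv_is_additive : additive chain_deriv.
Proof.
move=> F G; rewrite /chain_deriv -sumrB; apply: eq_bigr => i _.
by rewrite !raddfB /= mulrBl.
Qed.

HB.instance Definition _ := GRing.isAdditive.Build {mpoly K[n]} S chain_deriv
  chain_deriv_is_additive.

Lemma chain_derivM F G :
  chain_deriv (F * G) = chain_deriv F * phi G + phi F * chain_deriv G.
Proof.
rewrite /chain_deriv mulr_suml mulr_sumr -big_split; apply: eq_bigr => i _ /=.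
by rewrite mderivM rmorphD !rmorphM mulrDl -!mulrA [phi G * _]mulrC.
Qed.

Lemma chain_derivX i : chain_deriv 'X_i = w i.
Proof.
rewrite /chain_deriv (bigD1 i) //= big1 => [|j ji].
  by rewrite mderivX mnm1E eqxx -{1}[U_(i)%MM]add0m addmK mpolyX0 scale1r rmorph1
    mul1r addr0.
by rewrite mderivX mnm1E eq_sym (negPf ji) scale0r rmorph0 mul0r.
Qed.

Lemma chain_deriv_prod (I : finType) (F : I -> {mpoly K[n]}) :
  chain_deriv (\prod_i F i) = \sum_i chain_deriv (F i) * \prod_(j | j != i) phi (F j).
Proof. exact/derivation_prod/chain_derivM. Qed.

End ChainDerivative.

Section LinearForms.
Variables (K : fieldType) (n : nat).
Implicit Types (u : 'rV[K]_n) (v w : 'cV[K]_n).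

Definition lform u : {mpoly K[n]} := \sum_i u 0 i *: 'X_i.

Fact lform_is_linear : linear lform.
Proof.
move=> a u u'; rewrite /lform scaler_sumr -big_split; apply: eq_bigr => i _ /=.
by rewrite !mxE scalerDl scalerA.
Qed.

HB.instance Definition _ := GRing.isLinear.Build K 'rV[K]_n {mpoly K[n]} _ lform
  lform_is_linear.

Lemma lform_delta i : lform (delta_mx 0 i) = 'X_i.
Proof.
rewrite /lform (bigD1 i) //= big1 => [|j ji]; first by rewrite mxE !eqxx scale1r addr0.
by rewrite mxE (negPf ji) andbF scale0r.
Qed.

Lemma pev_lform u v : pev (lform u) v = (u *m v) 0 0.
Proof.
rewrite /pev /lform rmorph_sum mxE; apply: eq_bigr => i _ /=.
by rewrite mevalZ mevalXU.
Qed.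

Lemma mderiv_lform u i : (lform u)^`M(i) = (u 0 i)%:MP.
Proof.
rewrite /lform raddf_sum (bigD1 i) //= big1 => [|j ji].
  by rewrite mderivZ mderivX mnm1E eqxx -{1}[U_(i)%MM]add0m addmK mpolyX0 scale1r
    alg_mpolyC addr0.
by rewrite mderivZ mderivX mnm1E (negPf ji) scale0r scaler0.
Qed.

Lemma lform_homog u : lform u \is 1.-homog.
Proof. by apply: rpred_sum => i _; rewrite rpredZ // dhomogX /= mdeg1. Qed.

Lemma dhomog_prod_lform d (u : 'I_d -> 'rV[K]_n) : \prod_j lform (u j) \is d.-homog.
Proof.
elim: d u => [|d IHd] u; first by rewrite big_ord0 dhomog1.
rewrite big_ord_recr.
have := dhomogM (IHd (fun i => u (widen_ord (leqnSn d) i))) (lform_homog (u ord_max)).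
by rewrite addn1.
Qed.

Lemma chain_deriv_meval_lform u v w :
  chain_deriv (meval (fun i => v i 0)) (fun i => w i 0) (lform u) = (u *m w) 0 0.
Proof.
rewrite /chain_deriv mxE; apply: eq_bigr => i _ /=.
by rewrite mderiv_lform mevalC.
Qed.

Lemma pullbackX m (A : 'M[K]_(m, n)) i : pullback 'X_i A = lform (row i A).
Proof.
rewrite /pullback comp_mpolyXU -tnth_nth /linforms tnth_mktuple.
by apply: eq_bigr => j _; rewrite mxE.
Qed.

Lemma dpullbackE m k (F : {mpoly K[m]}) (A B : 'M[K]_(m, k)) :
  dpullback F A B = chain_deriv (comp_mpoly (linforms A)) (tnth (linforms B)) F.
Proof. by []. Qed.

End LinearForms.

Section Monomials.
Variables (K : fieldType) (n : nat).

Definition mono_vars (m : 'X_{1..n}) : seq 'I_n :=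
  flatten [seq nseq (m i) i | i <- enum 'I_n].

Lemma size_mono_vars m : size (mono_vars m) = mdeg m.
Proof.
rewrite size_flatten /shape -map_comp sumnE big_map mdegE big_enum.
by apply: eq_bigr => i _ /=; rewrite size_nseq.
Qed.

Lemma mpolyX_vars m : 'X_[m] = \prod_(i <- mono_vars m) 'X_i :> {mpoly K[n]}.
Proof.
rewrite mpolyXE_id big_flatten big_map big_enum; apply: eq_bigr => i _.
by rewrite big_nseq iter_mulr_1.
Qed.

End Monomials.

Section FrameIndex.
Variables (n d : nat).

(* A word in the forms W (coded by None) and Z_i (coded by Some i) of the frame below. *)
Definition frame_index := {ffun 'I_d -> option 'I_n}.

Definition lead_slot (b : frame_index) : option 'I_d := [pick j | b j != None].

Lemma lead_slotP b : b != [ffun => None] ->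
  exists2 j0, lead_slot b = Some j0 & b j0 != None.
Proof.
rewrite /lead_slot; case: pickP => [j0 bj0 _|bN0]; first by exists j0.
by case/eqP; apply/ffunP => j; rewrite ffunE; apply/eqP/negbFE/bN0.
Qed.

End FrameIndex.

Section Frame.
Variables (K : fieldType) (n d : nat) (q : 'cV[K]_n) (c : 'I_n).
Hypothesis qc_neq0 : q c 0 != 0.

Definition frame (o : option 'I_n) : 'rV[K]_n :=
  if o is Some i then delta_mx 0 i - (q i 0 / q c 0) *: delta_mx 0 c
  else (q c 0)^-1 *: delta_mx 0 c.

Lemma frame_mul o : (frame o *m q) 0 0 = (o == None)%:R.
Proof.
case: o => [i|] /=; rewrite ?mulmxBl -!scalemxAl -!rowE !mxE ?mulVf //.
by rewrite divfK // subrr.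
Qed.

Lemma scale_frame_mul x o : ((x *: frame o) *m q) 0 0 = x * (o == None)%:R.
Proof. by rewrite -scalemxAl mxE frame_mul. Qed.

Definition frame_coord (i : 'I_n) (o : option 'I_n) : K :=
  if o is Some j then (j == i)%:R else q i 0.

Lemma delta_frame i : delta_mx 0 i = \sum_o frame_coord i o *: frame o.
Proof.
rewrite sum_option /= (bigD1 i) //= big1 => [|j ji].
  by rewrite eqxx scale1r addr0 scalerA addrC subrK.
by rewrite (negPf ji) scale0r.
Qed.

Lemma X_frame i : 'X_i = \sum_o frame_coord i o *: lform (frame o).
Proof.
rewrite -lform_delta delta_frame linear_sum; apply: eq_bigr => o _.
exact: linearZ.
Qed.

Definition frame_monomial (b : frame_index n d) : {mpoly K[n]} :=
  \prod_j lform (frame (b j)).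

Lemma pev_frame_monomial b : pev (frame_monomial b) q = (b == [ffun => None])%:R.
Proof.
rewrite /pev rmorph_prod /=; under eq_bigr do rewrite -/(pev _ q) pev_lform frame_mul.
case: eqP => [->|/eqP/lead_slotP [j _ bj]]; first by rewrite big1 // => j _; rewrite ffunE.
by rewrite (bigD1 j) //= (negPf bj) mul0r.
Qed.

Lemma prod_X_frame (s : seq 'I_n) : size s = d ->
  \prod_(i <- s) 'X_i =
  \sum_(b : frame_index n d)
    (\prod_(j < d) frame_coord (nth c s j) (b j)) *: frame_monomial b.
Proof.
move=> size_s; rewrite (big_nth c) size_s big_mkord.
under eq_bigr do rewrite X_frame.
rewrite bigA_distr_bigA; apply: eq_bigr => b _.
by rewrite -scaler_prod.
Qed.

Lemma homog_frame_span F : F \is d.-homog ->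
  exists a : frame_index n d -> K, F = \sum_b a b *: frame_monomial b.
Proof.
move=> F_homog; pose a b := \sum_(m <- msupp F)
  F@_m * \prod_(j < d) frame_coord (nth c (mono_vars m) j) (b j).
exists a; rewrite {1}(mpolyE F).
under [in RHS]eq_bigr do rewrite /a scaler_suml.
rewrite exchange_big /=; apply: eq_big_seq => m m_supp.
rewrite mpolyX_vars prod_X_frame; last by rewrite size_mono_vars (dhomog_mf F_homog).
by rewrite scaler_sumr; apply: eq_bigr => b _; rewrite scalerA.
Qed.

Lemma vanishing_frame_span F : F \is d.-homog -> pev F q = 0 ->
  exists a : frame_index n d -> K,
    F = \sum_(b | b != [ffun => None]) a b *: frame_monomial b.
Proof.
move=> /homog_frame_span [a ->] Fq0; exists a.
rewrite (bigD1 [ffun => None]) //= [a _](_ : _ = 0) ?scale0r ?add0r //.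
move: Fq0; rewrite /pev rmorph_sum (bigD1 [ffun => None]) //= big1 => [|b bN].
  by rewrite addr0 mevalZ -/(pev _ q) pev_frame_monomial eqxx mulr1.
by rewrite mevalZ -/(pev _ q) pev_frame_monomial (negPf bN) mulr0.
Qed.

End Frame.

Section Universal.
Variables (K : fieldType) (n d N : nat).
(* Coordinates of P^N: [inl o] carries the frame form o (these coordinates make the
   embedding injective) and [inr (b, j)] the j-th factor of the word b. *)
Local Notation T := (option 'I_n + (frame_index n d * 'I_d))%type.
Variables (h : T -> 'I_N.+1) (g : 'I_N.+1 -> T).
Hypotheses (hgK : cancel h g) (ghK : cancel g h).

Definition slot (t : T) : option 'I_n := match t with inl o => o | inr (b, j) => b j end.

Definition univ_hypersurface : {mpoly K[N.+1]} :=
  \sum_(b : frame_index n d | b != [ffun => None]) \prod_j 'X_(h (inr (b, j))).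

Definition univ_point : 'cV[K]_N.+1 := \col_r (slot (g r) == None)%:R.

Definition rowfun_mx k (u : T -> 'rV[K]_k) : 'M[K]_(N.+1, k) := \matrix_r u (g r).

Lemma row_rowfun_mx k (u : T -> 'rV[K]_k) t : row (h t) (rowfun_mx u) = u t.
Proof. by rewrite rowK hgK. Qed.

Lemma rowfun_mx_mul k (u : T -> 'rV[K]_k) (v : 'cV[K]_k) r :
  (rowfun_mx u *m v) r 0 = (u (g r) *m v) 0 0.
Proof. by rewrite -[u (g r)](row_rowfun_mx u) -row_mul ghK [RHS]mxE. Qed.

Lemma univ_hypersurface_homog : univ_hypersurface \is d.-homog.
Proof.
apply: rpred_sum => b _; under eq_bigr do rewrite -lform_delta.
exact: dhomog_prod_lform.
Qed.

Lemma univ_point_neq0 : univ_point != 0.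
Proof.
apply/negP => /eqP /matrixP /(_ (h (inl None)) 0).
by rewrite !mxE hgK /= => /eqP; rewrite oner_eq0.
Qed.

Lemma pev_univ_point : pev univ_hypersurface univ_point = 0.
Proof.
rewrite /pev rmorph_sum big1 // => b /lead_slotP [j _ bj].
by rewrite rmorph_prod (bigD1 j) //= mevalXU mxE hgK /= (negPf bj) mul0r.
Qed.

Lemma univ_hypersurface_neq0 (i0 : 'I_n) (j0 : 'I_d) : univ_hypersurface != 0.
Proof.
pose b0 : frame_index n d := [ffun => Some i0].
have b0N : b0 != [ffun => None] by apply/eqP => /ffunP /(_ j0); rewrite !ffunE.
pose v r : K := if g r is inr (b, _) then (b == b0)%:R else 0.
apply/negP => /eqP Y0; have : univ_hypersurface.@[v] = 1.
  rewrite rmorph_sum (bigD1 b0) //= [X in _ + X]big1 => [|b /andP [_ bb0]].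
    by rewrite addr0 rmorph_prod big1 // => j _ /=; rewrite mevalXU /v hgK eqxx.
  by rewrite rmorph_prod (bigD1 j0) //= mevalXU /v hgK (negPf bb0) mul0r.
by rewrite Y0 meval0 => /eqP; rewrite eq_sym oner_eq0.
Qed.

Lemma pullback_univ_hypersurface k (u : T -> 'rV[K]_k) :
  pullback univ_hypersurface (rowfun_mx u) =
  \sum_(b | b != [ffun => None]) \prod_j lform (u (inr (b, j))).
Proof.
rewrite /pullback rmorph_sum; apply: eq_bigr => b _.
by rewrite rmorph_prod; apply: eq_bigr => j _; rewrite -(row_rowfun_mx u) -pullbackX.
Qed.

Lemma dpullback_univ_hypersurface k (u v : T -> 'rV[K]_k) :
  dpullback univ_hypersurface (rowfun_mx u) (rowfun_mx v) =
  \sum_(b | b != [ffun => None]) \sum_j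
    lform (v (inr (b, j))) * \prod_(j' | j' != j) lform (u (inr (b, j'))).
Proof.
rewrite dpullbackE raddf_sum; apply: eq_bigr => b _ /=.
rewrite chain_deriv_prod; apply: eq_bigr => j _.
rewrite chain_derivX /linforms tnth_mktuple; congr (_ * _).
  by rewrite -(row_rowfun_mx v); apply: eq_bigr => i _; rewrite !mxE.
by apply: eq_bigr => j' _; rewrite -(row_rowfun_mx u) -pullbackX.
Qed.

Section Embedding.
Variables (q : 'cV[K]_n) (c : 'I_n).
Hypothesis qc_neq0 : q c 0 != 0.
Implicit Types (a : frame_index n d -> K) (t : T).

(* The coefficient of the word b is put on its first Z-factor, which vanishes at q, so
   that it does not move the image of q. *)
Definition lead_scale a (x : K) t : K :=
  if t is inr (b, j) then (if lead_slot b == Some j then a b else x) else x.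

Lemma lead_scale_none a x t : slot t = None -> lead_scale a x t = x.
Proof.
case: t => [//|[b j] /= bjN]; rewrite /lead_slot; case: pickP => [j0 bj0|//].
by case: eqP => // [[j0j]]; rewrite j0j bjN in bj0.
Qed.

Lemma lead_scale_slot b : b != [ffun => None] -> exists2 j0, b j0 != None &
  forall a x j, lead_scale a x (inr (b, j)) = if j == j0 then a b else x.
Proof.
case/lead_slotP=> j0 bj0 bNj0; exists j0 => // a x j /=.
by rewrite bj0 (inj_eq Some_inj) eq_sym.
Qed.

Definition univ_row a t : 'rV[K]_n := lead_scale a 1 t *: frame q c (slot t).

Definition univ_matrix a := rowfun_mx (univ_row a).

Lemma prod_univ_row a b : b != [ffun => None] ->
  \prod_j lform (univ_row a (inr (b, j))) = a b *: frame_monomial q c b.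
Proof.
case/lead_scale_slot=> j0 _ scaleE; rewrite /frame_monomial.
under eq_bigr do rewrite /univ_row linearZ scaleE.
by rewrite scaler_prod (bigD1 j0) //= eqxx big1 ?mulr1 // => j /negPf ->.
Qed.

Lemma sum_lead_scale_frame a a' b : b != [ffun => None] ->
  \sum_j lead_scale a' 0 (inr (b, j)) *:
    (lform (frame q c (b j)) * \prod_(j' | j' != j) lform (univ_row a (inr (b, j')))) =
  a' b *: frame_monomial q c b.
Proof.
case/lead_scale_slot=> j0 _ scaleE; under eq_bigr do rewrite scaleE.
rewrite (bigD1 j0) //= eqxx [X in _ + X]big1 => [|j /negPf ->]; last by rewrite scale0r.
rewrite addr0 /frame_monomial [in RHS](bigD1 j0) //=; congr (_ *: (_ * _)).
by apply: eq_bigr => j /negPf jj0; rewrite /univ_row scaleE jj0 scale1r.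
Qed.

Lemma pullback_univ_matrix a :
  pullback univ_hypersurface (univ_matrix a) =
  \sum_(b | b != [ffun => None]) a b *: frame_monomial q c b.
Proof.
by rewrite pullback_univ_hypersurface; apply: eq_bigr => b; apply: prod_univ_row.
Qed.

Lemma univ_matrix_point a : univ_matrix a *m q = univ_point.
Proof.
apply/matrixP => r k; rewrite [k]ord1 rowfun_mx_mul scale_frame_mul // /univ_point mxE.
by case: eqP => [/(lead_scale_none a 1) ->|_]; rewrite ?mulr1 ?mulr0.
Qed.

Lemma univ_matrix_rank a : \rank (univ_matrix a) = n.
Proof.
apply/eqP; change (row_full (univ_matrix a)); rewrite -sub1mx.
apply/row_subP => i; rewrite row1 (delta_frame q c).
apply: summx_sub => o _; apply: scalemx_sub.
suff -> : frame q c o = row (h (inl o)) (univ_matrix a) by exact: row_sub.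
by rewrite row_rowfun_mx /univ_row /= scale1r.
Qed.

Definition tangent_correction a (q' : 'cV[K]_n) : {mpoly K[n]} :=
  \sum_(b | b != [ffun => None]) \sum_j ((univ_row a (inr (b, j)) *m q') 0 0) *:
    (lform (frame q c None) * \prod_(j' | j' != j) lform (univ_row a (inr (b, j')))).

Lemma tangent_correction_homog a q' : tangent_correction a q' \is d.-homog.
Proof.
rewrite rpred_sum // => b _; rewrite rpred_sum // => j _; rewrite rpredZ //.
rewrite (_ : _ * _ = \prod_j' lform (if j' == j then frame q c None
                                       else univ_row a (inr (b, j')))).
  exact: dhomog_prod_lform.
by rewrite [RHS](bigD1 j) //= eqxx; congr (_ * _); apply: eq_bigr => j' /negPf ->.
Qed.

Lemma pev_tangent_correction a q' :
  pev (tangent_correction a q') q =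
  chain_deriv (meval (fun i => q i 0)) (fun i => q' i 0)
    (pullback univ_hypersurface (univ_matrix a)).
Proof.
rewrite pullback_univ_hypersurface /pev !raddf_sum; apply: eq_bigr => b _ /=.
rewrite chain_deriv_prod raddf_sum; apply: eq_bigr => j _ /=.
rewrite chain_deriv_meval_lform mevalZ rmorphM rmorph_prod /=.
by rewrite -[_ *: 'e_c]/(frame q c None) -/(pev _ q) pev_lform frame_mul // mul1r.
Qed.

Definition tangent_matrix a a' (q' : 'cV[K]_n) := rowfun_mx (fun t =>
  - ((univ_row a t *m q') 0 0) *: frame q c None + lead_scale a' 0 t *: frame q c (slot t)).

Lemma tangent_matrix_point a a' q' :
  univ_matrix a *m q' + tangent_matrix a a' q' *m q = 0.
Proof.
apply/matrixP => r k; rewrite [k]ord1 mxE !rowfun_mx_mul mulmxDl.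
rewrite [X in _ + X]mxE !scale_frame_mul // [RHS]mxE mulr1 addrA subrr add0r.
by case: (eqVneq (slot (g r)) None) => [/(lead_scale_none a') ->|_]; rewrite ?mul0r ?mulr0.
Qed.

Lemma dpullback_tangent_matrix a a' q' :
  dpullback univ_hypersurface (univ_matrix a) (tangent_matrix a a' q') =
  \sum_(b | b != [ffun => None]) a' b *: frame_monomial q c b - tangent_correction a q'.
Proof.
rewrite dpullback_univ_hypersurface -sumrB; apply: eq_bigr => b bN.
rewrite -(sum_lead_scale_frame a a' bN) -sumrB; apply: eq_bigr => j _.
set x := (univ_row a _ *m q') 0 0; set y := lead_scale a' 0 _.
have -> : lform (- x *: frame q c None + y *: frame q c (b j)) =
          - x *: lform (frame q c None) + y *: lform (frame q c (b j)).
  by rewrite linearP [X in _ + X]linearZ.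
by rewrite mulrDl -!scalerAl scaleNr addrC.
Qed.

Lemma univ_matrix_dphi a :
  pullback univ_hypersurface (univ_matrix a) != 0 ->
  dphi_surjective d univ_point univ_hypersurface (univ_matrix a) q
    (pullback univ_hypersurface (univ_matrix a)).
Proof.
set X := pullback _ _ => X_neq0 l mu _ muX q' G' G'_homog tangent.
have -> : mu = 1.
  have : (mu - 1) *: X = 0 by rewrite scalerBl scale1r -muX subrr.
  by move/eqP; rewrite scaler_eq0 (negPf X_neq0) orbF subr_eq0 => /eqP.
have G'E_q : pev (G' + tangent_correction a q') q = 0.
  rewrite /pev rmorphD /= -/(pev G' q) -/(pev (tangent_correction a q') q).
  by rewrite pev_tangent_correction.
have [a' G'E] :=
  vanishing_frame_span qc_neq0 (rpredD G'_homog (tangent_correction_homog a q')) G'E_q.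
exists (tangent_matrix a a' q'), 0, 0; split; first by rewrite scale0r tangent_matrix_point.
by rewrite dpullback_tangent_matrix -G'E addrK scale0r add0r scale1r.
Qed.

End Embedding.

End Universal.

Theorem lemma4p2 (K : closedFieldType) (hK : [pchar K] =i pred0)
    (n d : nat) (hn : (0 < n)%N) (hd : (0 < d)%N) :
  exists (N : nat) (p : 'cV[K]_N.+1) (Y : {mpoly K[N.+1]}),
    pointed_hypersurface d p Y /\
    (forall (q : 'cV[K]_n.+1) (X : {mpoly K[n.+1]}),
        pointed_hypersurface d q X ->
        exists A : 'M[K]_(N.+1, n.+1), is_param_section p Y A q X) /\
    (forall (q : 'cV[K]_n.+1) (X : {mpoly K[n.+1]}),
        pointed_hypersurface d q X ->
        exists A : 'M[K]_(N.+1, n.+1),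
          is_param_section p Y A q X /\ dphi_surjective d p Y A q X).
Proof.
have [N [h [g [hgK ghK]]]] :=
  exists_ord_bij (inl None : option 'I_n.+1 + (frame_index n.+1 d * 'I_d)).
have embed q X : pointed_hypersurface d q X -> exists A : 'M[K]_(N.+1, n.+1),
    is_param_section (univ_point K g) (univ_hypersurface K h) A q X /\
    dphi_surjective d (univ_point K g) (univ_hypersurface K h) A q X.
  case=> /cV_neq0P [c qc_neq0] X_neq0 X_homog Xq.
  have [a Xa] := vanishing_frame_span qc_neq0 X_homog Xq.
  have XA : pullback (univ_hypersurface K h) (univ_matrix g q c a) = X.
    by rewrite (pullback_univ_matrix hgK) Xa.
  exists (univ_matrix g q c a); rewrite -XA; split.
    split; [exact: univ_matrix_rank | by rewrite XA | |].
      by exists 1; rewrite ?oner_eq0 // scale1r (univ_matrix_point hgK ghK).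
    by exists 1; rewrite ?oner_eq0 // scale1r.
  by apply: (univ_matrix_dphi hgK ghK qc_neq0); rewrite XA.
exists N, (univ_point K g), (univ_hypersurface K h); split; last split.
- split; first exact: univ_point_neq0.
  + exact: univ_hypersurface_neq0 hgK ord0 (Ordinal hd).
  + exact: univ_hypersurface_homog.
  + exact: pev_univ_point.
- by move=> q X /embed [A [A_section _]]; exists A.
- exact: embed.
Qed.
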